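(* Let $A$ be a quasi-ring, $M$ a right module over $A$ and $N$ a submodule of $M$. Put $[M,N]=\{a\in A : M\cdot a\subset N\}$ and, for $m\in M$, $E_m=\{r\in M : m+r\in N\}$. Define a relation $R$ on $M$ by: $m\,R\,n$ if and only if $(m+N)\cap(n+N)\neq\emptyset$ and $E_{ma}=E_{na}$ for every $a\in[M,N]$. Then $R$ is an equivalence relation on $M$ which is compatible with the addition of $M$ and with the external multiplication by elements of $A$. Consequently the quotient set $M/N:=M/R$ inherits a structure of right $A$-module.
   Context: A semiring is a set with two operations $+,\cdot$ such that $(A,+)$ is a commutative monoid with neutral element $0$, $(A,\cdot)$ is a monoid with unit $1$, multiplication distributes over addition, and $0$ is absorbing. An element $x$ of a commutative monoid $(G,+)$ is quasi-invertible if there is $y$ with $x+y+x=x$ and $y+x+y=y$. A quasi-ring is a semiring whose unit $1$ is quasi-invertible for addition. A right module over a quasi-ring $A$ is a commutative monoid $(M,+)$ with an external law $M\times A\to M$, $(m,a)\mapsto m\cdot a$, satisfying $(m\cdot a)\cdot b=m\cdot(ab)$, $m\cdot(a+b)=m\cdot a+m\cdot b$, $(m+n)\cdot a=m\cdot a+n\cdot a$, $m\cdot 1=m$. A submodule is a subset containing $0$ stable under addition and external multiplication. *)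

From HB Require Import structures.
From mathcomp Require Import all_boot all_order all_algebra.
Set Implicit Arguments. Unset Strict Implicit. Unset Printing Implicit Defensive.
Import GRing.Theory.
Local Open Scope ring_scope.

(* A semiring in the sense of the paper is exactly a [pzSemiRingType]
   (commutative additive monoid, multiplicative monoid, distributivity,
   0 absorbing; no nontriviality assumption). *)

Definition quasi_invertible (G : Type) (add : G -> G -> G) (x : G) : Prop :=
  exists y, add (add x y) x = x /\ add (add y x) y = y.

Definition quasi_ring (A : pzSemiRingType) : Prop :=
  quasi_invertible (@GRing.add A) 1.

Definition comm_monoid (G : Type) (z : G) (add : G -> G -> G) : Prop :=
  [/\ forall x y w, add x (add y w) = add (add x y) w,
      forall x y, add x y = add y x
    & forall x, add z x = x].

Definition right_action (A : pzSemiRingType) (M : Type)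
    (add : M -> M -> M) (act : M -> A -> M) : Prop :=
  [/\ forall m a b, act (act m a) b = act m (a * b),
      forall m a b, act m (a + b) = add (act m a) (act m b),
      forall m n a, act (add m n) a = add (act m a) (act n a)
    & forall m, act m 1 = m].

Definition right_module (A : pzSemiRingType) (M : Type) (z : M)
    (add : M -> M -> M) (act : M -> A -> M) : Prop :=
  comm_monoid z add /\ right_action add act.

Definition submodule (A : pzSemiRingType) (M : nmodType)
    (act : M -> A -> M) (N : M -> Prop) : Prop :=
  [/\ N 0,
      forall x y, N x -> N y -> N (x + y)
    & forall x a, N x -> N (act x a)].

Definition colon (A : pzSemiRingType) (M : nmodType)
    (act : M -> A -> M) (N : M -> Prop) : A -> Prop :=
  fun a => forall m, N (act m a).

Definition Eset (M : nmodType) (N : M -> Prop) (m : M) : M -> Prop :=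
  fun r => N (m + r).

Definition Rrel (A : pzSemiRingType) (M : nmodType)
    (act : M -> A -> M) (N : M -> Prop) (m n : M) : Prop :=
  (exists x, (exists u, N u /\ x = m + u) /\ (exists v, N v /\ x = n + v))
  /\ (forall a, colon act N a ->
        forall r, Eset N (act m a) r <-> Eset N (act n a) r).

(* The coset condition is an
     equivalence compatible with + and the action because N is a submodule;
     the E-condition is an equality of sets, hence an equivalence, and it is
     stable under translation (E_(m+p) r = E_m (p + r)) and under the action
     (a in [M,N] implies b * a in [M,N]). *)

From HB Require Import structures.
From mathcomp Require Import all_boot all_order all_algebra.
From Stdlib Require Import ClassicalEpsilon ProofIrrelevance FunctionalExtensionality PropExtensionality.
Set Implicit Arguments. Unset Strict Implicit.
Import GRing.Theory.
Local Open Scope ring_scope.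

Section ClassQuotient.
Variables (T : Type) (E : T -> T -> Prop).
Hypotheses (E_refl : forall t, E t t)
           (E_sym : forall s t, E s t -> E t s)
           (E_trans : forall s t u, E s t -> E t u -> E s u).

Definition eq_class := {P : T -> Prop | exists t, P = E t}.

Definition class_of (t : T) : eq_class := exist _ (E t) (ex_intro _ t erefl).

Definition class_repr (q : eq_class) : T :=
  proj1_sig (constructive_indefinite_description _ (proj2_sig q)).

Lemma eq_class_ext (p q : eq_class) : proj1_sig p = proj1_sig q -> p = q.
Proof. by move=> pq; apply: eq_sig_hprop => // *; apply: proof_irrelevance. Qed.

Lemma class_reprK (q : eq_class) : class_of (class_repr q) = q.
Proof.
apply: eq_class_ext; rewrite /class_repr.
by case: (constructive_indefinite_description _ _).
Qed.

Lemma class_of_eq (s t : T) : class_of s = class_of t <-> E s t.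
Proof.
split=> [st | Est].
  have /= -> : proj1_sig (class_of s) = proj1_sig (class_of t) by rewrite st.
  exact: E_refl.
apply: eq_class_ext; apply: functional_extensionality => u.
apply: propositional_extensionality.
by split=> /= [Esu | Etu]; [exact: E_trans (E_sym Est) Esu | exact: E_trans Est Etu].
Qed.

Lemma class_repr_rel (t : T) : E (class_repr (class_of t)) t.
Proof. by apply/class_of_eq; rewrite class_reprK. Qed.

End ClassQuotient.

Section QuotientModule.
Variables (A : pzSemiRingType) (M : nmodType) (act : M -> A -> M).
Variable E : M -> M -> Prop.
Hypothesis act_mod : right_action (@GRing.add M) act.
Hypotheses (E_refl : forall m, E m m)
           (E_sym : forall m n, E m n -> E n m)
           (E_trans : forall m n p, E m n -> E n p -> E m p)
           (E_add : forall m m' n n', E m n -> E m' n' -> E (m + m') (n + n'))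
           (E_act : forall m n a, E m n -> E (act m a) (act n a)).

Local Notation Q := (@eq_class M E).
Local Notation pi := (@class_of M E).
Local Notation rep := (@class_repr M E).
Local Notation piK := (@class_reprK M E).
Local Notation pi_eq := (@class_of_eq M E E_refl E_sym E_trans).
Local Notation rep_rel := (@class_repr_rel M E E_refl E_sym E_trans).

Definition qadd (q q' : Q) : Q := pi (rep q + rep q').
Definition qact (q : Q) (a : A) : Q := pi (act (rep q) a).

(* The projection is additive and commutes with the action; both follow
   from the compatibility of E, since any representative is E-related to
   the element it represents. *)
Lemma class_of_add m n : pi (m + n) = qadd (pi m) (pi n).
Proof.
by apply/pi_eq; apply: E_sym; apply: E_add; apply: rep_rel.
Qed.

Lemma class_of_act m a : pi (act m a) = qact (pi m) a.
Proof.
by apply/pi_eq; apply: E_sym; apply: E_act; apply: rep_rel.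
Qed.

(* Each axiom transfers from M along the surjection pi. *)
Lemma quotient_right_module : right_module (pi 0) qadd qact.
Proof.
case: act_mod => actA actDr actDl act1; split; split.
- by move=> x y w; rewrite -(piK x) -(piK y) -(piK w) -!class_of_add addrA.
- by move=> x y; rewrite -(piK x) -(piK y) -!class_of_add addrC.
- by move=> x; rewrite -(piK x) -class_of_add add0r.
- by move=> x a b; rewrite -(piK x) -!class_of_act actA.
- by move=> x a b; rewrite -(piK x) -!class_of_act -class_of_add actDr.
- move=> x y a; rewrite -(piK x) -(piK y) -class_of_add -!class_of_act.
  by rewrite actDl class_of_add.
- by move=> x; rewrite -(piK x) -class_of_act act1.
Qed.

End QuotientModule.

Section RrelCongruence.
Variables (A : pzSemiRingType) (M : nmodType) (act : M -> A -> M) (N : M -> Prop).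
Hypothesis act_mod : right_action (@GRing.add M) act.
Hypothesis N_sub : submodule act N.
Local Notation R := (Rrel act N).

Lemma RrelP m n :
  R m n <-> (exists u v, [/\ N u, N v & m + u = n + v]) /\
            (forall a, colon act N a ->
               forall r, N (act m a + r) <-> N (act n a + r)).
Proof.
split.
  case=> [[x [[u [Nu ->]] [v [Nv mnuv]]]] E]; split=> //.
  by exists u, v.
case=> [[u [v [Nu Nv mnuv]]] E]; split=> //.
by exists (m + u); split; [exists u | exists v].
Qed.

Lemma Rrel_refl m : R m m.
Proof.
case: N_sub => N0 _ _; apply/RrelP; split=> //.
by exists 0, 0.
Qed.

Lemma Rrel_sym m n : R m n -> R n m.
Proof.
case/RrelP=> [[u [v [Nu Nv mnuv]]] E]; apply/RrelP; split.
  by exists v, u.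
by move=> a Ha r; apply: iff_sym; apply: E.
Qed.

(* Transitivity: if m + u = n + v and n + v' = p + w then
   m + (u + v') = p + (w + v), and N is closed under addition. *)
Lemma Rrel_trans m n p : R m n -> R n p -> R m p.
Proof.
case: N_sub => _ ND _.
case/RrelP=> [[u [v [Nu Nv mnuv]]] E1] /RrelP[[v' [w [Nv' Nw npvw]]] E2].
apply/RrelP; split; last by move=> a Ha r; exact: iff_trans (E1 a Ha r) (E2 a Ha r).
exists (u + v'), (w + v); split; try exact: ND.
by rewrite addrA mnuv -addrA (addrC v) addrA npvw addrA.
Qed.

(* Compatibility with addition: sums of coset witnesses are witnesses, and
   E_((m+m').a) r = E_(m.a) (m'.a + r) reduces the E-condition to the
   hypotheses one summand at a time. *)
Lemma Rrel_add m m' n n' : R m n -> R m' n' -> R (m + m') (n + n').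
Proof.
case: N_sub => _ ND _; case: act_mod => _ _ actDl _.
case/RrelP=> [[u [v [Nu Nv mnuv]]] E1] /RrelP[[u' [v' [Nu' Nv' mnuv']]] E2].
apply/RrelP; split.
  exists (u + u'), (v + v'); split; try exact: ND.
  by rewrite addrACA mnuv mnuv' addrACA.
move=> a Ha r; rewrite !actDl -!addrA.
apply: iff_trans (E1 a Ha (act m' a + r)) _.
rewrite addrA (addrC (act n a)) -addrA.
apply: iff_trans (E2 a Ha (act n a + r)) _.
by rewrite addrA (addrC (act n' a)) -addrA.
Qed.

Lemma colon_mull a b : colon act N a -> colon act N (b * a).
Proof. by case: act_mod => actA _ _ _ Ha m; rewrite -actA; apply: Ha. Qed.

(* Compatibility with the action: witnesses are moved by a (N is a
   submodule), and E_((m.a).b) = E_(m.(a b)) with a b in the left ideal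
   [M,N] whenever b is. *)
Lemma Rrel_act m n a : R m n -> R (act m a) (act n a).
Proof.
case: N_sub => _ _ NA; case: act_mod => actA _ actDl _.
case/RrelP=> [[u [v [Nu Nv mnuv]]] E]; apply/RrelP; split.
  by exists (act u a), (act v a); split; try exact: NA; rewrite -!actDl mnuv.
by move=> b Hb r; rewrite !actA; apply: E; apply: colon_mull.
Qed.

End RrelCongruence.

Theorem proposition2p1 (A : pzSemiRingType) (M : nmodType)
    (act : M -> A -> M) (N : M -> Prop) :
  quasi_ring A ->
  right_action (@GRing.add M) act ->
  submodule act N ->
  let R := Rrel act N in
  (* R is an equivalence relation *)
  ((forall m, R m m) /\
   (forall m n, R m n -> R n m) /\
   (forall m n p, R m n -> R n p -> R m p)) /\
  (* compatible with addition *)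
  (forall m m' n n', R m n -> R m' n' -> R (m + m') (n + n')) /\
  (* compatible with external multiplication *)
  (forall m n a, R m n -> R (act m a) (act n a)) /\
  (* hence the quotient set M/R inherits a right A-module structure *)
  (exists (Q : Type) (z : Q) (add : Q -> Q -> Q) (qact : Q -> A -> Q)
          (pi : M -> Q),
     (forall q, exists m, pi m = q) /\
     (forall m n, pi m = pi n <-> R m n) /\
     right_module z add qact /\
     pi 0 = z /\
     (forall m n, pi (m + n) = add (pi m) (pi n)) /\
     (forall m a, pi (act m a) = qact (pi m) a)).
Proof.
move=> _ act_mod N_sub R.
have R_refl := @Rrel_refl _ _ act N N_sub.
have R_sym := @Rrel_sym _ _ act N.
have R_trans := @Rrel_trans _ _ act N N_sub.
have R_add := @Rrel_add _ _ act N act_mod N_sub.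
have R_act := @Rrel_act _ _ act N act_mod N_sub.
split; first by split; [| split].
do 2 (split; first by []).
exists (eq_class R), (class_of R 0), (@qadd _ R), (@qact _ _ act R), (class_of R).
split; first by move=> q; exists (class_repr q); apply: class_reprK.
split; first exact: class_of_eq R_refl R_sym R_trans.
split; first exact: quotient_right_module act_mod R_refl R_sym R_trans R_add R_act.
split=> //; split=> ? ?.
- exact (class_of_add R_refl R_sym R_trans R_add _ _).
- exact (class_of_act R_refl R_sym R_trans R_act _ _).
Qed.
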